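(* Let $\mathcal{A},\mathcal{C}$ be small categories and $\Gamma,P:\mathcal{A}^{op}\times\mathcal{A}\times\mathcal{C}^{op}\times\mathcal{C}\to\mathbf{Set}$ functors. Let $S_1$ be the set of dinatural transformations, dinatural in $(z,x)\in\mathcal{A}\times\mathcal{C}$, from $(z',z,x',x)\mapsto\Gamma(z',z,x',x)$ to $(z',z,x',x)\mapsto P(z',z,x',x)$ (components $h_{z,x}:\Gamma(z,z,x,x)\to P(z,z,x,x)$), and let $S_2$ be the set of dinatural transformations, dinatural in $(a,b,x)\in\mathcal{A}^{op}\times\mathcal{A}\times\mathcal{C}$, from $(a',b',x',a,b,x)\mapsto\hom_{\mathcal{A}}(a,b)\times\Gamma(b',a',x',x)$ to $(a',b',x',a,b,x)\mapsto P(a,b,x',x)$ (components $\alpha_{a,b,x}:\hom_{\mathcal{A}}(a,b)\times\Gamma(b,a,x,x)\to P(a,b,x,x)$). Then there is a bijection $J:S_1\to S_2$, natural in $\Gamma$ and $P$, such that $J(h)_{z,z,x}(\mathrm{id}_z,k)=h_{z,x}(k)$ for all $z\in\mathcal{A}$, $x\in\mathcal{C}$, $k\in\Gamma(z,z,x,x)$; its inverse sends $\alpha\in S_2$ to the family $k\mapsto\alpha_{z,z,x}(\mathrm{id}_z,k)$.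
   Context: For difunctors $F,G:\mathcal{B}^{op}\times\mathcal{B}\to\mathcal{D}$, a dinatural transformation $\alpha:F\Rightarrow G$ is a family $\alpha_x:F(x,x)\to G(x,x)$, $x\in\mathcal{B}$, such that for every $f:a\to b$: $G(f,\mathrm{id}_b)\circ\alpha_b\circ F(\mathrm{id}_b,f)=G(\mathrm{id}_a,f)\circ\alpha_a\circ F(f,\mathrm{id}_a)$. When $\mathcal{B}$ is a product of categories, the arguments of functors $\mathcal{B}^{op}\times\mathcal{B}\to\mathbf{Set}$ are reordered freely, and dinaturality is with respect to objects of the product category. In $(a',b',x',a,b,x)$ the primed arguments are the contravariant ones ($a'\in\mathcal{A}$, $b'\in\mathcal{A}^{op}$, $x'\in\mathcal{C}^{op}$). *)

Set Implicit Arguments.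
Unset Strict Implicit.

(** Categories (morphism equality is Leibniz equality). *)
Record Category := {
  Ob :> Type;
  Hom : Ob -> Ob -> Type;
  idm : forall a, Hom a a;
  comp : forall a b c, Hom b c -> Hom a b -> Hom a c;
  comp_id_l : forall a b (f : Hom a b), comp (idm b) f = f;
  comp_id_r : forall a b (f : Hom a b), comp f (idm a) = f;
  comp_assoc : forall a b c d (h : Hom c d) (g : Hom b c) (f : Hom a b),
      comp h (comp g f) = comp (comp h g) f
}.
Arguments Hom {C} a b : rename.
Arguments idm {C} a : rename.
Arguments comp {C a b c} g f : rename.

Definition op (A : Category) : Category :=
  {| Ob := Ob A;
     Hom a b := @Hom A b a;
     idm a := @idm A a;
     comp a b c g f := @comp A c b a f g;
     comp_id_l a b f := @comp_id_r A b a f;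
     comp_id_r a b f := @comp_id_l A b a f;
     comp_assoc a b c d h g f := eq_sym (@comp_assoc A d c b a f g h) |}.

Definition prodC (A B : Category) : Category.
Proof.
  refine {| Ob := (Ob A * Ob B)%type;
            Hom p q := (@Hom A (fst p) (fst q) * @Hom B (snd p) (snd q))%type;
            idm p := (@idm A (fst p), @idm B (snd p));
            comp p q r g f := (comp (fst g) (fst f), comp (snd g) (snd f)) |}.
  - intros [a1 b1] [a2 b2] [f g]; simpl; rewrite !comp_id_l; reflexivity.
  - intros [a1 b1] [a2 b2] [f g]; simpl; rewrite !comp_id_r; reflexivity.
  - intros [] [] [] [] [] [] []; simpl; rewrite !comp_assoc; reflexivity.
Defined.

Record Functor (A B : Category) := {
  fobj :> Ob A -> Ob B;
  fmap : forall a b, @Hom A a b -> @Hom B (fobj a) (fobj b);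
  fmap_id : forall a, fmap (idm a) = idm (fobj a);
  fmap_comp : forall a b c (g : @Hom A b c) (f : @Hom A a b),
      fmap (comp g f) = comp (fmap g) (fmap f)
}.
Arguments fmap {A B} F {a b} f : rename.

Record SetFunctor (B : Category) := {
  F0 :> Ob B -> Type;
  F1 : forall a b, @Hom B a b -> F0 a -> F0 b;
  F1_id : forall a (u : F0 a), F1 (idm a) u = u;
  F1_comp : forall a b c (g : @Hom B b c) (f : @Hom B a b) (u : F0 a),
      F1 (comp g f) u = F1 g (F1 f u)
}.
Arguments F1 {B} F {a b} f u : rename.

Local Unset Implicit Arguments.
Record NatTrans (B : Category) (F G : SetFunctor B) := {
  eta :> forall (c : Ob B), F c -> G c;
  eta_nat : forall a b (f : @Hom B a b) (u : F a),
      eta b (F1 F f u) = F1 G f (eta a u)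
}.
Arguments eta {B F G} _ c _.
Local Set Implicit Arguments.

Definition precomp (A B : Category) (R : Functor A B) (G : SetFunctor B)
  : SetFunctor A.
Proof.
  refine {| F0 a := G (R a); F1 a b f u := F1 G (fmap R f) u |}.
  - intros a u; rewrite fmap_id; apply F1_id.
  - intros a b c g f u; rewrite fmap_comp; apply F1_comp.
Defined.

Definition sfprod (B : Category) (F G : SetFunctor B) : SetFunctor B.
Proof.
  refine {| F0 c := (F c * G c)%type;
            F1 a b f u := (F1 F f (fst u), F1 G f (snd u)) |}.
  - intros a [u v]; simpl; rewrite !F1_id; reflexivity.
  - intros a b c g f [u v]; simpl; rewrite !F1_comp; reflexivity.
Defined.

Definition homF (A : Category) : SetFunctor (prodC (op A) A).
Proof.
  refine (@Build_SetFunctor (prodC (op A) A)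
            (fun p : Ob A * Ob A => @Hom A (fst p) (snd p))
            (fun (p q : Ob A * Ob A)
                 (f : (@Hom A (fst q) (fst p) * @Hom A (snd p) (snd q))%type) h =>
              comp (snd f) (comp h (fst f))) _ _).
  - intros [a b] h; simpl; rewrite comp_id_l, comp_id_r; reflexivity.
  - intros [] [] [] [g' g] [f' f] h; simpl.
    rewrite !comp_assoc; reflexivity.
Defined.

Definition dinatural (B : Category) (F G : SetFunctor (prodC (op B) B))
  (alpha : forall x : Ob B, F (x, x) -> G (x, x)) : Prop :=
  forall (a b : Ob B) (f : @Hom B a b) (u : F (b, a)),
    @F1 _ G (b, b) (a, b) (f, idm b)
        (alpha b (@F1 _ F (b, a) (b, b) (idm b, f) u))
    = @F1 _ G (a, a) (a, b) (idm a, f)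
        (alpha a (@F1 _ F (b, a) (a, a) (f, idm a) u)).

(** The domain category A^op x A x C^op x C of Gamma and P. *)
Definition Q (A C : Category) : Category :=
  prodC (prodC (prodC (op A) A) (op C)) C.

Definition B1 (A C : Category) : Category := prodC A C.

(* ((z',x'),(z,x)) |-> (z',z,x',x) *)
Definition R1 (A C : Category) : Functor (prodC (op (B1 A C)) (B1 A C)) (Q A C).
Proof.
  refine (@Build_Functor (prodC (op (B1 A C)) (B1 A C)) (Q A C)
            (fun p : Ob (prodC (op (B1 A C)) (B1 A C)) => (fst (fst p), fst (snd p), snd (fst p), snd (snd p)) : Ob (Q A C))
            (fun (p q : Ob (prodC (op (B1 A C)) (B1 A C))) (f : @Hom (prodC (op (B1 A C)) (B1 A C)) p q) => (fst (fst f), fst (snd f), snd (fst f), snd (snd f)) : @Hom (Q A C) ((fst (fst p), fst (snd p), snd (fst p), snd (snd p)) : Ob (Q A C)) ((fst (fst q), fst (snd q), snd (fst q), snd (snd q)) : Ob (Q A C))) _ _).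
  - intros [[] []]; reflexivity.
  - intros [[] []] [[] []] [[] []] [[] []] [[] []]; reflexivity.
Defined.

Definition S1 (A C : Category) (Gam P : SetFunctor (Q A C)) : Type :=
  { h : forall y : Ob (B1 A C),
        precomp (R1 A C) Gam (y, y) -> precomp (R1 A C) P (y, y)
  | dinatural h }.

Definition B2 (A C : Category) : Category := prodC (prodC (op A) A) C.

(* ((a',b',x'),(a,b,x)) |-> (a,b) *)
Definition Rh (A C : Category)
  : Functor (prodC (op (B2 A C)) (B2 A C)) (prodC (op A) A).
Proof.
  refine (@Build_Functor (prodC (op (B2 A C)) (B2 A C)) (prodC (op A) A)
            (fun p : Ob (prodC (op (B2 A C)) (B2 A C)) => (fst (fst (snd p)), snd (fst (snd p))) : Ob (prodC (op A) A))
            (fun (p q : Ob (prodC (op (B2 A C)) (B2 A C))) (f : @Hom (prodC (op (B2 A C)) (B2 A C)) p q) => (fst (fst (snd f)), snd (fst (snd f))) : @Hom (prodC (op A) A) ((fst (fst (snd p)), snd (fst (snd p))) : Ob (prodC (op A) A)) ((fst (fst (snd q)), snd (fst (snd q))) : Ob (prodC (op A) A))) _ _).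
  - intros [[[] ?] [[] ?]]; reflexivity.
  - intros [[[] ?] [[] ?]] [[[] ?] [[] ?]] [[[] ?] [[] ?]]
           [[[] ?] [[] ?]] [[[] ?] [[] ?]]; reflexivity.
Defined.

(* ((a',b',x'),(a,b,x)) |-> (b',a',x',x) *)
Definition Rg (A C : Category)
  : Functor (prodC (op (B2 A C)) (B2 A C)) (Q A C).
Proof.
  refine (@Build_Functor (prodC (op (B2 A C)) (B2 A C)) (Q A C)
            (fun p : Ob (prodC (op (B2 A C)) (B2 A C)) => (snd (fst (fst p)), fst (fst (fst p)), snd (fst p), snd (snd p)) : Ob (Q A C))
            (fun (p q : Ob (prodC (op (B2 A C)) (B2 A C))) (f : @Hom (prodC (op (B2 A C)) (B2 A C)) p q) => (snd (fst (fst f)), fst (fst (fst f)), snd (fst f), snd (snd f)) : @Hom (Q A C) ((snd (fst (fst p)), fst (fst (fst p)), snd (fst p), snd (snd p)) : Ob (Q A C)) ((snd (fst (fst q)), fst (fst (fst q)), snd (fst q), snd (snd q)) : Ob (Q A C))) _ _).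
  - intros [[[] ?] [[] ?]]; reflexivity.
  - intros [[[] ?] [[] ?]] [[[] ?] [[] ?]] [[[] ?] [[] ?]]
           [[[] ?] [[] ?]] [[[] ?] [[] ?]]; reflexivity.
Defined.

(* ((a',b',x'),(a,b,x)) |-> (a,b,x',x) *)
Definition Rp (A C : Category)
  : Functor (prodC (op (B2 A C)) (B2 A C)) (Q A C).
Proof.
  refine (@Build_Functor (prodC (op (B2 A C)) (B2 A C)) (Q A C)
            (fun p : Ob (prodC (op (B2 A C)) (B2 A C)) => (fst (fst (snd p)), snd (fst (snd p)), snd (fst p), snd (snd p)) : Ob (Q A C))
            (fun (p q : Ob (prodC (op (B2 A C)) (B2 A C))) (f : @Hom (prodC (op (B2 A C)) (B2 A C)) p q) => (fst (fst (snd f)), snd (fst (snd f)), snd (fst f), snd (snd f)) : @Hom (Q A C) ((fst (fst (snd p)), snd (fst (snd p)), snd (fst p), snd (snd p)) : Ob (Q A C)) ((fst (fst (snd q)), snd (fst (snd q)), snd (fst q), snd (snd q)) : Ob (Q A C))) _ _).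
  - intros [[[] ?] [[] ?]]; reflexivity.
  - intros [[[] ?] [[] ?]] [[[] ?] [[] ?]] [[[] ?] [[] ?]]
           [[[] ?] [[] ?]] [[[] ?] [[] ?]]; reflexivity.
Defined.

(* (a',b',x',a,b,x) |-> hom_A(a,b) x Gamma(b',a',x',x) *)
Definition Src2 (A C : Category) (Gam : SetFunctor (Q A C))
  : SetFunctor (prodC (op (B2 A C)) (B2 A C)) :=
  sfprod (precomp (Rh A C) (homF A)) (precomp (Rg A C) Gam).

(* (a',b',x',a,b,x) |-> P(a,b,x',x) *)
Definition Tgt2 (A C : Category) (P : SetFunctor (Q A C))
  : SetFunctor (prodC (op (B2 A C)) (B2 A C)) :=
  precomp (Rp A C) P.

Definition S2 (A C : Category) (Gam P : SetFunctor (Q A C)) : Type :=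
  { alpha : forall y : Ob (B2 A C), Src2 Gam (y, y) -> Tgt2 P (y, y)
  | dinatural alpha }.

(* A dinatural h : F => G has, for every f : a -> b, a diagonal
   h_f = G(1,f) o h_a o F(f,1) : F(b,a) -> G(a,b), and these diagonals are
   natural along twisted arrows: G(g,g') o h_f o F(g',g) = h_(g' f g).
   J(h)_(a,b,x)(f,-) is the diagonal of h at (f, 1_x), and twisted naturality
   is exactly the dinaturality of J(h).  Conversely, dinaturality of alpha at
   (1_a, f, 1_x) gives alpha_(a,b,x)(f,-) = P(1,f) o alpha_(a,a,x)(1_a, Gamma(f,1) -),
   so alpha is determined by its values at identities. *)

From Stdlib Require Import FunctionalExtensionality ProofIrrelevance.

Notation dimap G f g := (@F1 _ G (_, _) (_, _) (f, g)).
Notation qmap G f1 f2 f3 f4 := (@F1 _ G (_, _, _, _) (_, _, _, _) ((f1, f2), f3, f4)).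

Lemma dimap_id (B : Category) (G : SetFunctor (prodC (op B) B)) (a b : Ob B) (u : G (a, b)) :
  dimap G (idm a) (idm b) u = u.
Proof. exact (@F1_id _ G (a, b) u). Qed.

Lemma qmap_id (A C : Category) (G : SetFunctor (Q A C)) (a b : Ob A) (c d : Ob C)
    (u : G (a, b, c, d)) :
  qmap G (idm a) (idm b) (idm c) (idm d) u = u.
Proof. exact (@F1_id _ G (a, b, c, d) u). Qed.

Ltac functor_simpl :=
  repeat rewrite <- F1_comp; simpl;
  rewrite ?comp_id_l, ?comp_id_r, ?comp_assoc, ?qmap_id.

Section DinaturalDiagonal.

Context {B : Category} {F G : SetFunctor (prodC (op B) B)}.
Variable h : forall x : Ob B, F (x, x) -> G (x, x).
Hypothesis h_dinat : dinatural h.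

(* The common value of both sides of the dinaturality hexagon of [h] at [f]. *)
Definition dinat_diag {a b : Ob B} (f : @Hom B a b) (u : F (b, a)) : G (a, b) :=
  dimap G (idm a) f (h a (dimap F f (idm a) u)).

Lemma dinat_diag_id (a : Ob B) (u : F (a, a)) : dinat_diag (idm a) u = h a u.
Proof. unfold dinat_diag; rewrite !dimap_id; reflexivity. Qed.

Lemma dinat_diag_natural {a b a0 b0 : Ob B} (g : @Hom B a0 a) (g' : @Hom B b b0)
    (f : @Hom B a b) (u : F (b0, a0)) :
  dimap G g g' (dinat_diag f (dimap F g' g u)) = dinat_diag (comp g' (comp f g)) u.
Proof.
  unfold dinat_diag.
  transitivity (dimap G (idm a0) (comp g' f)
    (dimap G g (idm a) (h a (dimap F (idm a) g (dimap F (comp g' f) (idm a0) u))))).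
  { functor_simpl. reflexivity. }
  rewrite h_dinat. functor_simpl. reflexivity.
Qed.

End DinaturalDiagonal.

Arguments dinat_diag : simpl never.

Lemma dinat_diag_transport {B : Category} {F F' G G' : SetFunctor (prodC (op B) B)}
    (theta : NatTrans _ F' F) (phi : NatTrans _ G G')
    (h : forall x : Ob B, F (x, x) -> G (x, x))
    (h' : forall x : Ob B, F' (x, x) -> G' (x, x)) :
  (forall x u, h' x u = phi (x, x) (h x (theta (x, x) u))) ->
  forall (a b : Ob B) (f : @Hom B a b) (u : F' (b, a)),
    dinat_diag h' f u = phi (a, b) (dinat_diag h f (theta (b, a) u)).
Proof.
  intros H a b f u; unfold dinat_diag.
  rewrite H, (eta_nat _ _ _ theta), <- (eta_nat _ _ _ phi).
  reflexivity.
Qed.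

Definition nat_precomp {A B : Category} (R : Functor A B) {G G' : SetFunctor B}
    (theta : NatTrans _ G G') : NatTrans _ (precomp R G) (precomp R G') :=
  Build_NatTrans A (precomp R G) (precomp R G') (fun c => theta (R c))
    (fun a b f u => eta_nat _ _ _ theta (R a) (R b) (fmap R f) u).

Section Correspondence.

Context {A C : Category} {Gam P : SetFunctor (Q A C)}.

Lemma S1_diag_natural (h : S1 Gam P) {a b a0 b0 : Ob A} {x x' x0 x0' : Ob C}
    (g : @Hom A a0 a) (g' : @Hom A b b0) (e : @Hom C x0 x) (e' : @Hom C x' x0')
    (f : @Hom A a b) (c : @Hom C x x') (k : Gam (b0, a0, x0', x0)) :
  qmap P g g' e e'
    (dinat_diag (proj1_sig h) (a := (a, x)) (b := (b, x')) (f, c) (qmap Gam g' g e' e k))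
  = dinat_diag (proj1_sig h) (a := (a0, x0)) (b := (b0, x0'))
      (comp g' (comp f g), comp e' (comp c e)) k.
Proof.
  exact (@dinat_diag_natural _ _ _ _ (proj2_sig h) (a, x) (b, x') (a0, x0) (b0, x0')
           (g, e) (g', e') (f, c) k).
Qed.

Definition S2_hexagon (alpha : forall y : Ob (B2 A C), Src2 Gam (y, y) -> Tgt2 P (y, y)) : Prop :=
  forall a1 b1 x1 a2 b2 x2 (g : @Hom A a2 a1) (g' : @Hom A b1 b2) (c : @Hom C x1 x2)
         (phi : @Hom A a1 b1) (k : Gam (b2, a2, x2, x1)),
    qmap P (idm a2) (idm b2) c (idm x2)
      (alpha ((a2, b2), x2) (comp g' (comp phi g), qmap Gam (idm b2) (idm a2) (idm x2) c k))
    = qmap P g g' (idm x1) c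
        (alpha ((a1, b1), x1) (phi, qmap Gam g' g c (idm x1) k)).

Lemma dinatural_S2_hexagon
    (alpha : forall y : Ob (B2 A C), Src2 Gam (y, y) -> Tgt2 P (y, y)) :
  dinatural alpha <-> S2_hexagon alpha.
Proof.
  split.
  - intros H a1 b1 x1 a2 b2 x2 g g' c phi k.
    generalize (H (a1, b1, x1) (a2, b2, x2) (g, g', c) (phi, k)); simpl.
    rewrite comp_id_l, comp_id_r; trivial.
  - intros H [[a1 b1] x1] [[a2 b2] x2] [[g g'] c] [phi k]; simpl.
    rewrite comp_id_l, comp_id_r; apply H.
Qed.

Definition to_S2_fun (h : S1 Gam P)
  : forall y : Ob (B2 A C), Src2 Gam (y, y) -> Tgt2 P (y, y) :=
  fun y u => dinat_diag (proj1_sig h) (a := (fst (fst y), snd y)) (b := (snd (fst y), snd y))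
                        (fst u, idm (snd y)) (snd u).

Lemma to_S2_dinatural (h : S1 Gam P) : dinatural (to_S2_fun h).
Proof.
  apply dinatural_S2_hexagon; intros a1 b1 x1 a2 b2 x2 g g' c phi k.
  unfold to_S2_fun; simpl.
  rewrite !S1_diag_natural, !comp_id_l, !comp_id_r.
  reflexivity.
Qed.

Definition to_S2 (h : S1 Gam P) : S2 Gam P := exist _ (to_S2_fun h) (to_S2_dinatural h).

Lemma to_S2_id (h : S1 Gam P) z x (k : Gam (z, z, x, x)) :
  proj1_sig (to_S2 h) ((z, z), x) (idm z, k) = proj1_sig h (z, x) k.
Proof. exact (dinat_diag_id (proj1_sig h) (z, x) k). Qed.

Section S2Facts.

Variable alpha : S2 Gam P.

Let alpha_hexagon : S2_hexagon (proj1_sig alpha) :=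
  proj1 (dinatural_S2_hexagon _) (proj2_sig alpha).

Lemma S2_factor_left {a b : Ob A} {x : Ob C} (f : @Hom A a b) (k : Gam (b, a, x, x)) :
  proj1_sig alpha ((a, b), x) (f, k)
  = qmap P (idm a) f (idm x) (idm x)
      (proj1_sig alpha ((a, a), x) (idm a, qmap Gam f (idm a) (idm x) (idm x) k)).
Proof.
  generalize (alpha_hexagon _ _ _ _ _ _ (idm a) f (idm x) (idm a) k).
  rewrite !qmap_id, !comp_id_r; trivial.
Qed.

Lemma S2_factor_right {a b : Ob A} {x : Ob C} (f : @Hom A a b) (k : Gam (b, a, x, x)) :
  proj1_sig alpha ((a, b), x) (f, k)
  = qmap P f (idm b) (idm x) (idm x)
      (proj1_sig alpha ((b, b), x) (idm b, qmap Gam (idm b) f (idm x) (idm x) k)).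
Proof.
  generalize (alpha_hexagon _ _ _ _ _ _ f (idm b) (idm x) (idm b) k).
  rewrite !qmap_id, !comp_id_l; trivial.
Qed.

Lemma S2_dinatural_C (a b : Ob A) (x1 x2 : Ob C) (c : @Hom C x1 x2) (f : @Hom A a b)
    (k : Gam (b, a, x2, x1)) :
  qmap P (idm a) (idm b) c (idm x2)
    (proj1_sig alpha ((a, b), x2) (f, qmap Gam (idm b) (idm a) (idm x2) c k))
  = qmap P (idm a) (idm b) (idm x1) c
      (proj1_sig alpha ((a, b), x1) (f, qmap Gam (idm b) (idm a) c (idm x1) k)).
Proof.
  generalize (alpha_hexagon _ _ _ _ _ _ (idm a) (idm b) c f k).
  rewrite comp_id_r, comp_id_l; trivial.
Qed.

End S2Facts.

Definition to_S1_fun (alpha : S2 Gam P)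
  : forall y : Ob (B1 A C), precomp (R1 A C) Gam (y, y) -> precomp (R1 A C) P (y, y) :=
  fun y k => proj1_sig alpha ((fst y, fst y), snd y) (idm (fst y), k).

Lemma to_S1_dinatural (alpha : S2 Gam P) : dinatural (to_S1_fun alpha).
Proof.
  intros [z1 x1] [z2 x2] [g c] u; unfold to_S1_fun; simpl.
  transitivity (qmap P (idm z1) (idm z2) c (idm x2)
    (proj1_sig alpha ((z1, z2), x2) (g, qmap Gam (idm z2) (idm z1) (idm x2) c u))).
  { rewrite (S2_factor_right alpha g). functor_simpl. reflexivity. }
  rewrite S2_dinatural_C, (S2_factor_left alpha g). functor_simpl. reflexivity.
Qed.

Definition to_S1 (alpha : S2 Gam P) : S1 Gam P :=
  exist _ (to_S1_fun alpha) (to_S1_dinatural alpha).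

Lemma to_S2K (h : S1 Gam P) : to_S1 (to_S2 h) = h.
Proof.
  destruct h as [h h_dinat]; apply subset_eq_compat.
  apply functional_extensionality_dep; intros [z x].
  apply functional_extensionality; intros k.
  exact (to_S2_id (exist _ h h_dinat) z x k).
Qed.

Lemma to_S1K (alpha : S2 Gam P) : to_S2 (to_S1 alpha) = alpha.
Proof.
  destruct alpha as [alpha alpha_dinat]; apply subset_eq_compat.
  apply functional_extensionality_dep; intros [[a b] x].
  apply functional_extensionality; intros [f k].
  symmetry; exact (S2_factor_left (exist _ alpha alpha_dinat) f k).
Qed.

End Correspondence.

Theorem mainTheorem2 (A C : Category) :
  exists J : forall Gam P : SetFunctor (Q A C), S1 Gam P -> S2 Gam P,
    (* J is a bijection, with the stated inverse *)
    (forall Gam P : SetFunctor (Q A C),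
       exists K : S2 Gam P -> S1 Gam P,
         (forall h, K (J Gam P h) = h) /\
         (forall alpha, J Gam P (K alpha) = alpha) /\
         (forall alpha (z : Ob A) (x : Ob C) (k : Gam (z, z, x, x)),
             proj1_sig (K alpha) (z, x) k
             = proj1_sig alpha ((z, z), x) (idm z, k))) /\
    (* J(h)_{z,z,x}(id_z, k) = h_{z,x}(k) *)
    (forall (Gam P : SetFunctor (Q A C)) (h : S1 Gam P)
            (z : Ob A) (x : Ob C) (k : Gam (z, z, x, x)),
        proj1_sig (J Gam P h) ((z, z), x) (idm z, k) = proj1_sig h (z, x) k) /\
    (* naturality in Gamma (contravariant) and P (covariant) *)
    (forall (Gam1 Gam2 P1 P2 : SetFunctor (Q A C))
            (theta : @NatTrans (Q A C) Gam2 Gam1) (phi : @NatTrans (Q A C) P1 P2)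
            (h1 : S1 Gam1 P1) (h2 : S1 Gam2 P2),
        (forall (z : Ob A) (x : Ob C) (k : Gam2 (z, z, x, x)),
            proj1_sig h2 (z, x) k
            = phi (z, z, x, x) (proj1_sig h1 (z, x) (theta (z, z, x, x) k))) ->
        forall (a b : Ob A) (x : Ob C) (f : @Hom A a b) (k : Gam2 (b, a, x, x)),
          proj1_sig (J Gam2 P2 h2) ((a, b), x) (f, k)
          = phi (a, b, x, x)
              (proj1_sig (J Gam1 P1 h1) ((a, b), x) (f, theta (b, a, x, x) k))).
Proof.
  exists (@to_S2 A C); split; [| split].
  - intros Gam P; exists to_S1.
    split; [exact to_S2K | split; [exact to_S1K | reflexivity]].
  - exact (@to_S2_id A C).
  - intros Gam1 Gam2 P1 P2 theta phi h1 h2 H a b x f k.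
    refine (dinat_diag_transport (nat_precomp (R1 A C) theta) (nat_precomp (R1 A C) phi)
              (proj1_sig h1) (proj1_sig h2) _ (a, x) (b, x) (f, idm x) k).
    intros [z x'] k'; apply H.
Qed.
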